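(* Let $d\ge 1$, let $\mathbf C_1,\mathbf C_2$ be real symmetric strictly positive-definite $d\times d$ matrices, let $\lambda_1,\lambda_2\in[0,1]$ with $\lambda_1+\lambda_2=1$, and set $\mathbf C=\lambda_1\mathbf C_1+\lambda_2\mathbf C_2$. For $\mathbf t\in\mathbb R^d$ define $$F^{(1)}(\mathbf t)=\sum_{a=1,2}\lambda_a\exp\Big(\tfrac12\mathbf t^{\rm T}\mathbf C_a\mathbf t\Big)-\exp\Big(\tfrac12\mathbf t^{\rm T}\mathbf C\mathbf t\Big),$$ $$F^{(2)}(\mathbf t)=F^{(1)}(\mathbf t)\,\log\big[(2\pi)^d\det\mathbf C\big]+\sum_{a=1,2}\lambda_a\exp\Big(\tfrac12\mathbf t^{\rm T}\mathbf C_a\mathbf t\Big)\,\mathrm{tr}\big(\mathbf C^{-1}\mathbf C_a\big)-d\exp\Big(\tfrac12\mathbf t^{\rm T}\mathbf C\mathbf t\Big),$$ and $\mathbb S=\{\mathbf t\in\mathbb R^d:\ F^{(1)}(\mathbf t)\ge 0\ \text{and}\ F^{(2)}(\mathbf t)\le 0\}$. If $\mathbf t\in\mathbb S$, then $$h(f^{\rm No}_{\mathbf C})\exp\Big(\tfrac12\mathbf t^{\rm T}\mathbf C\mathbf t\Big)-\lambda_1h(f^{\rm No}_{\mathbf C_1})\exp\Big(\tfrac12\mathbf t^{\rm T}\mathbf C_1\mathbf t\Big)-\lambda_2h(f^{\rm No}_{\mathbf C_2})\exp\Big(\tfrac12\mathbf t^{\rm T}\mathbf C_2\mathbf t\Big)\ge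 0,$$ i.e. $$\log\big[(2\pi e)^d\det\mathbf C\big]\exp\Big(\tfrac12\mathbf t^{\rm T}\mathbf C\mathbf t\Big)-\sum_{a=1,2}\lambda_a\log\big[(2\pi e)^d\det\mathbf C_a\big]\exp\Big(\tfrac12\mathbf t^{\rm T}\mathbf C_a\mathbf t\Big)\ge 0,$$ with equality if and only if $\lambda_1\lambda_2=0$ or $\mathbf C_1=\mathbf C_2$.
   Context: $\log$ denotes the natural logarithm. For a strictly positive-definite $d\times d$ matrix $\mathbf C$, $f^{\rm No}_{\mathbf C}(\mathbf x)=(2\pi)^{-d/2}(\det\mathbf C)^{-1/2}\exp(-\tfrac12\mathbf x^{\rm T}\mathbf C^{-1}\mathbf x)$ is the density of the centered normal distribution $\mathrm N(\mathbf 0,\mathbf C)$ on $\mathbb R^d$, and $h(f)=-\int_{\mathbb R^d}f\log f\,d\mathbf x$ is the Shannon differential entropy, so that $h(f^{\rm No}_{\mathbf C})=\tfrac12\log\big[(2\pi e)^d\det\mathbf C\big]$. The left-hand side equals $\sigma_{\mathbf t}(\mathbf C)-\lambda_1\sigma_{\mathbf t}(\mathbf C_1)-\lambda_2\sigma_{\mathbf t}(\mathbf C_2)$ where $\sigma_{\mathbf t}(\mathbf C)=-\int_{\mathbb R^d}e^{\mathbf t^{\rm T}\mathbf x}f^{\rm No}_{\mathbf C}(\mathbf x)\log f^{\rm No}_{\mathbf C}(\mathbf x)\,d\mathbf x$ is the weighted differential entropy with exponential weight function $\phi(\mathbf x)=e^{\mathbf t^{\rm T}\mathbf x}$. *)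

From HB Require Import structures.
From Stdlib Require Import Reals Lra ClassicalEpsilon FunctionalExtensionality.
From mathcomp Require Import all_boot all_order all_algebra.

Set Implicit Arguments.
Unset Strict Implicit.
Unset Printing Implicit Defensive.

Definition R_eqb (x y : R) : bool := if Req_EM_T x y then true else false.
Lemma R_eqP : Equality.axiom R_eqb.
Proof. by move=> x y; rewrite /R_eqb; case: Req_EM_T => H; constructor. Qed.

HB.instance Definition _ := hasDecEq.Build R R_eqP.

Definition R_find (P : pred R) (n : nat) : option R :=
  match excluded_middle_informative (exists x, P x) with
  | left H => Some (proj1_sig (constructive_indefinite_description _ H))
  | right _ => None
  end.

Lemma R_find_correct P n x : R_find P n = Some x -> P x.
Proof.
rewrite /R_find; case: excluded_middle_informative => // H [<-].
exact: proj2_sig (constructive_indefinite_description _ H).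
Qed.

Lemma R_find_complete (P : pred R) : (exists x, P x) -> exists n, R_find P n.
Proof. by move=> H; exists 0%N; rewrite /R_find; case: excluded_middle_informative. Qed.

Lemma R_find_ext (P Q : pred R) : P =1 Q -> R_find P =1 R_find Q.
Proof. by move=> /functional_extensionality ->. Qed.

HB.instance Definition _ := hasChoice.Build R R_find_correct R_find_complete R_find_ext.

Lemma R_addA : forall x y z : R, Rplus x (Rplus y z) = Rplus (Rplus x y) z. Proof. move=> *; lra. Qed.
Lemma R_addC : forall x y : R, Rplus x y = Rplus y x. Proof. move=> *; lra. Qed.
Lemma R_add0 : forall x : R, Rplus R0 x = x. Proof. move=> *; lra. Qed.
Lemma R_addN : forall x : R, Rplus (Ropp x) x = R0. Proof. move=> *; lra. Qed.

HB.instance Definition _ := GRing.isZmodule.Build R R_addA R_addC R_add0 R_addN.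

Lemma R_mulA : forall x y z : R, Rmult x (Rmult y z) = Rmult (Rmult x y) z. Proof. move=> *; ring. Qed.
Lemma R_mulC : forall x y : R, Rmult x y = Rmult y x. Proof. move=> *; ring. Qed.
Lemma R_mul1 : forall x : R, Rmult R1 x = x. Proof. move=> *; ring. Qed.
Lemma R_mulDl : forall x y z : R, Rmult (Rplus x y) z = Rplus (Rmult x z) (Rmult y z). Proof. move=> *; ring. Qed.
Lemma R_one_neq0 : (R1 != R0 :> R).
Proof. by apply/eqP; apply R1_neq_R0. Qed.

HB.instance Definition _ :=
  GRing.Zmodule_isComNzRing.Build R R_mulA R_mulC R_mul1 R_mulDl R_one_neq0.

Lemma R_mulV (x : R) : x != R0 -> (Rinv x * x)%R = R1.
Proof. by move/eqP=> H; apply: Rinv_l. Qed.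

HB.instance Definition _ := GRing.ComNzRing_isField.Build R R_mulV Rinv_0.

Local Open Scope ring_scope.

Definition sym_posdef (d : nat) (A : 'M[R]_d) : Prop :=
  A^T = A /\
  forall x : 'cV[R]_d, x != 0 -> Rlt 0%R ((x^T *m A *m x) ord0 ord0).

Definition qform (d : nat) (A : 'M[R]_d) (t : 'cV[R]_d) : R := (t^T *m A *m t) ord0 ord0.

Local Close Scope ring_scope.
Local Open Scope R_scope.

(* Shannon differential entropy of N(0,C) in its closed form
   h(f^No_C) = 1/2 log[(2 pi e)^d det C]  (as given in the paper's context) *)
Definition hNo (d : nat) (C : 'M[R]_d) : R :=
  / 2 * ln ((2 * PI * exp 1) ^ d * (\det C)%R).

Definition F1 (d : nat) (l1 l2 : R) (C1 C2 : 'M[R]_d) (t : 'cV[R]_d) : R :=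
  let C := (l1 *: C1 + l2 *: C2)%R in
  l1 * exp (/ 2 * qform C1 t) + l2 * exp (/ 2 * qform C2 t) - exp (/ 2 * qform C t).

Definition F2 (d : nat) (l1 l2 : R) (C1 C2 : 'M[R]_d) (t : 'cV[R]_d) : R :=
  let C := (l1 *: C1 + l2 *: C2)%R in
  F1 l1 l2 C1 C2 t * ln ((2 * PI) ^ d * (\det C)%R)
  + (l1 * exp (/ 2 * qform C1 t) * (\tr (invmx C *m C1))%R
     + l2 * exp (/ 2 * qform C2 t) * (\tr (invmx C *m C2))%R)
  - INR d * exp (/ 2 * qform C t).

Definition setS (d : nat) (l1 l2 : R) (C1 C2 : 'M[R]_d) : 'cV[R]_d -> Prop :=
  fun t => 0 <= F1 l1 l2 C1 C2 t /\ F2 l1 l2 C1 C2 t <= 0.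

(** Since h(N(0,X)) = (d log(2 pi e) + log det X) / 2, a direct computation gives
    2 LHS = - F2(t) + sum_a l_a exp(t^T C_a t / 2) D(C, C_a),
    where D(A, B) = tr(A^-1 B) - d - log det(A^-1 B) is the LogDet divergence
    (twice the Kullback-Leibler divergence of N(0,B) from N(0,A)).  D is
    nonnegative and vanishes only at B = A: a congruence reduces this to A = 1,
    i.e. to log det M <= tr M - d for M positive definite, with equality only at
    M = 1, which follows by induction on d from log x <= x - 1 and the Schur
    complement of the (1,1) entry.  So LHS >= 0 as soon as F2(t) <= 0, and LHS = 0 with l1 l2 <> 0 forces
    C1 = C = C2. *)

From HB Require Import structures.
From Stdlib Require Import Reals Lra.
From mathcomp Require Import all_boot all_order all_algebra.
Set Implicit Arguments.
Unset Strict Implicit.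
Unset Printing Implicit Defensive.

Import GRing.Theory.

Local Open Scope R_scope.

Lemma ln_le_sub1 x : 0 < x -> ln x <= x - 1.
Proof. by move=> x_gt0; have := exp_ineq1_le (ln x); rewrite exp_ln //; lra. Qed.

Lemma ln_eq_sub1 x : 0 < x -> ln x = x - 1 -> x = 1.
Proof.
move=> x_gt0 lnx; have [lnx0 | lnx_neq0] := Req_dec (ln x) 0.
  by move: lnx; rewrite lnx0; lra.
by have := exp_ineq1 _ lnx_neq0; rewrite exp_ln //; lra.
Qed.

Local Close Scope R_scope.
Local Open Scope ring_scope.

(* The ring operations of the MathComp structure on [R] are Stdlib's up to
   conversion only, and [lra] recognises Stdlib's syntactically. *)
Lemma RaddE (x y : R) : x + y = Rplus x y. Proof. by []. Qed.
Lemma RmulE (x y : R) : x * y = Rmult x y. Proof. by []. Qed.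
Lemma R0E : 0 = IZR 0 :> R. Proof. by []. Qed.
Lemma RinvE (x : R) : x^-1 = Rinv x. Proof. by []. Qed.

Lemma sym_posdef_congr n (M Q : 'M[R]_n) :
  sym_posdef M -> Q \in unitmx -> sym_posdef (Q *m M *m Q^T).
Proof.
move=> [sM pM] uQ; split; first by rewrite !trmx_mul trmxK sM mulmxA.
move=> x x0; have -> : x^T *m (Q *m M *m Q^T) *m x = (Q^T *m x)^T *m M *m (Q^T *m x).
  by rewrite trmx_mul trmxK !mulmxA.
apply: pM; apply: contra x0 => /eqP Qx0.
have uQt : Q^T \in unitmx by rewrite unitmx_tr.
by rewrite -(mulKmx uQt x) Qx0 mulmx0.
Qed.

Lemma sym_posdef_convex n (C1 C2 : 'M[R]_n) l1 l2 :
  sym_posdef C1 -> sym_posdef C2 -> Rle 0 l1 -> Rle 0 l2 -> Rlt 0 (Rplus l1 l2) ->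
  sym_posdef (l1 *: C1 + l2 *: C2).
Proof.
move=> [s1 p1] [s2 p2] h1 h2 h12; split; first by rewrite linearD !linearZ /= s1 s2.
move=> x x0; have := p1 x x0; have := p2 x x0.
rewrite mulmxDr mulmxDl -!scalemxAr -!scalemxAl.
move: (x^T *m C1 *m x) (x^T *m C2 *m x) => q1 q2.
rewrite !mxE RaddE !RmulE R0E; move: (q1 _ _) (q2 _ _) => y1 y2 y2_gt0 y1_gt0.
case: (Rle_lt_or_eq_dec _ _ h1) h12 => [l1_gt0 | <-] h12.
  have := Rmult_lt_0_compat _ _ l1_gt0 y1_gt0.
  have := Rmult_le_pos _ _ h2 (Rlt_le _ _ y2_gt0); lra.
have l2_gt0 : Rlt 0 l2 by lra.
have := Rmult_lt_0_compat _ _ l2_gt0 y2_gt0; lra.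
Qed.

Lemma posdef_diag_gt0 n (M : 'M[R]_n) i : sym_posdef M -> Rlt 0 (M i i).
Proof.
move=> [_ pM]; have := pM (delta_mx i 0).
rewrite trmx_delta -rowE -colE !mxE; apply; apply/eqP => /matrixP/(_ i 0).
by rewrite !mxE !eqxx; apply: R1_neq_R0.
Qed.

Lemma sym_posdef_drsub m n (M : 'M[R]_(m + n)) : sym_posdef M -> sym_posdef (drsubmx M).
Proof.
move=> [sM pM]; split; first by rewrite trmx_drsub sM.
move=> y y0; have -> : y^T *m drsubmx M *m y = (col_mx 0 y)^T *m M *m col_mx 0 y.
  by rewrite -{2}[M]submxK tr_col_mx trmx0 mul_row_block !mul0mx !add0r mul_row_col mulmx0 add0r.
by apply: pM; rewrite col_mx_eq0 negb_and y0 orbT.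
Qed.

Section SchurComplement.
Variables (n : nat) (M : 'M[R]_(1 + n)).
Hypothesis HM : sym_posdef M.

Let a : R := ulsubmx M 0 0.
Let v := dlsubmx M.
Let S := drsubmx M - a^-1 *: (v *m v^T).
Let L := block_mx (1%:M : 'M_1) 0 (a^-1 *: v) 1%:M.
Let Blk := block_mx (a%:M : 'M_1) 0 0 S.

Lemma schur_pivot_gt0 : Rlt 0 a.
Proof. by rewrite /a !mxE; apply: posdef_diag_gt0. Qed.

Let a_neq0 : a != 0.
Proof. by apply/eqP => a0; move: schur_pivot_gt0; rewrite a0; apply: Rlt_irrefl. Qed.

Lemma schur_block : M = block_mx (a%:M : 'M_1) v^T v (drsubmx M).
Proof. by rewrite /v trmx_dlsub (proj1 HM) /a -mx11_scalar submxK. Qed.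

Lemma schur_factor : M = L *m Blk *m L^T.
Proof.
rewrite /L /Blk tr_block_mx !trmx1 !trmx0 !mulmx_block.
rewrite !mulmx0 !mul0mx !mulmx1 !mul1mx !addr0 !add0r.
rewrite mul_mx_scalar mul_scalar_mx linearZ /= !scalerA mulfV // !scale1r.
by rewrite -scalemxAr /S addrC subrK -schur_block.
Qed.

Let L_unit : L \in unitmx.
Proof. by rewrite unitmxE det_lblock !det1 mulr1 unitr1. Qed.

Lemma schur_posdef : sym_posdef S.
Proof.
have -> : S = drsubmx Blk by rewrite block_mxKdr.
apply: sym_posdef_drsub.
have -> : Blk = invmx L *m M *m (invmx L)^T.
  by rewrite schur_factor !mulmxA mulVmx // mul1mx trmx_inv -mulmxA mulmxV ?unitmx_tr // mulmx1.
by apply: sym_posdef_congr; rewrite ?unitmx_inv.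
Qed.

Lemma det_schur : \det M = a * \det S.
Proof.
by rewrite {1}schur_factor !det_mulmx det_tr det_lblock !det1 det_ublock det_scalar1 !mul1r mulr1.
Qed.

Lemma trace_schur : \tr M = a + (\tr S + a^-1 * \tr (v *m v^T)).
Proof.
rewrite {1}schur_block mxtrace_block trace_mx11 mxE eqxx mulr1n; congr (_ + _).
by rewrite -mxtraceZ -mxtraceD /S subrK.
Qed.

Lemma schur_eq1 : a = 1 -> S = 1%:M -> v = 0 -> M = 1%:M.
Proof.
move=> a1 S1 v0; have D1 : drsubmx M = 1%:M by rewrite -S1 /S v0 mul0mx scaler0 subr0.
by rewrite schur_block D1 v0 trmx0 a1 -scalar_mx_block.
Qed.

Lemma schur_lift_factor (P : 'M_n) : P \in unitmx -> S = P *m P^T ->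
  exists2 Q : 'M_(1 + n), Q \in unitmx & M = Q *m Q^T.
Proof.
move=> uP SP; pose B := block_mx ((sqrt a)%:M : 'M_1) 0 0 P.
have BB : B *m B^T = Blk.
  rewrite /B tr_block_mx !trmx0 tr_scalar_mx mulmx_block !mulmx0 !mul0mx !addr0 !add0r.
  rewrite -scalar_mxM RmulE sqrt_sqrt -?SP //; apply: Rlt_le; apply: schur_pivot_gt0.
exists (L *m B); last by rewrite trmx_mul !mulmxA -(mulmxA L) BB -schur_factor.
rewrite unitmx_mul L_unit unitmxE det_ublock det_scalar1 unitfE mulf_neq0 //.
by apply/eqP => sa0; have := sqrt_lt_R0 _ schur_pivot_gt0; rewrite sa0; apply: Rlt_irrefl.
Qed.

End SchurComplement.

Lemma posdef_factor n (M : 'M[R]_n) : sym_posdef M ->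
  exists2 P : 'M_n, P \in unitmx & M = P *m P^T.
Proof.
elim: n M => [|n IH] M HM.
  by exists 1%:M; rewrite ?unitmx1 // trmx1 mulmx1; apply/matrixP => [[]].
have [P uP SP] := IH _ (schur_posdef HM).
exact: schur_lift_factor SP.
Qed.

Lemma unitmx_det_sqr_gt0 n (P : 'M[R]_n) : P \in unitmx -> Rlt 0 (\det P * \det P).
Proof. by move=> uP; apply: Rsqr_pos_lt; apply/eqP; rewrite -unitfE -unitmxE. Qed.

Lemma posdef_det_gt0 n (M : 'M[R]_n) : sym_posdef M -> Rlt 0 (\det M).
Proof.
by move=> /posdef_factor[P uP ->]; rewrite det_mulmx det_tr; apply: unitmx_det_sqr_gt0.
Qed.

Lemma trace_outer_ge0 n (v : 'cV[R]_n) : Rle 0 (\tr (v *m v^T)).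
Proof.
rewrite /mxtrace; apply: (big_ind (Rle 0)); [exact: Rle_refl | | ].
  by move=> x y; rewrite RaddE; lra.
by move=> i _; rewrite mxE big_ord1 !mxE; apply: Rle_0_sqr.
Qed.

Lemma trace_outer_eq0 n (v : 'cV[R]_n) : \tr (v *m v^T) = 0 -> v = 0.
Proof.
move=> tr0; apply/matrixP => i j; rewrite (ord1 j) mxE.
have sq_ge0 k : Rle 0 (v k 0 * v k 0) by apply: Rle_0_sqr.
move: tr0; rewrite /mxtrace (bigD1 i) //=.
have : Rle 0 (\sum_(k | k != i) (v *m v^T) k k).
  apply: (big_ind (Rle 0)); [exact: Rle_refl | | ].
    by move=> x y; rewrite RaddE; lra.
  by move=> k _; rewrite mxE big_ord1 !mxE.
rewrite mxE big_ord1 !mxE RaddE => rest_ge0 sum0.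
by apply: Rsqr_0_uniq; apply: Rplus_eq_0_l (sq_ge0 i) rest_ge0 sum0.
Qed.

Lemma invmx_congr n (Q A : 'M[R]_n) : Q \in unitmx -> A \in unitmx ->
  invmx (Q *m A *m Q^T) = (invmx Q)^T *m invmx A *m invmx Q.
Proof.
move=> uQ uA; have uQt : Q^T \in unitmx by rewrite unitmx_tr.
have uX : Q *m A *m Q^T \in unitmx by rewrite !unitmx_mul uQ uA uQt.
have ZX : (invmx Q)^T *m invmx A *m invmx Q *m (Q *m A *m Q^T) = 1%:M.
  by rewrite !mulmxA mulmxKV // mulmxKV // trmx_inv mulVmx.
by rewrite -[invmx _]mul1mx -ZX -mulmxA mulmxV // mulmx1.
Qed.

Lemma det_congr n (Q A : 'M[R]_n) : \det (Q *m A *m Q^T) = \det Q * \det Q * \det A.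
Proof. by rewrite !det_mulmx det_tr mulrAC. Qed.

Local Close Scope ring_scope.
Local Open Scope R_scope.

Lemma ln_det_le_trace n (M : 'M[R]_n) : sym_posdef M ->
  ln (\det M)%R <= (\tr M)%R - INR n /\ (ln (\det M)%R = (\tr M)%R - INR n -> M = (1%:M)%R).
Proof.
elim: n M => [|n IH] M HM.
  have -> : M = (1%:M)%R by apply/matrixP => [[]].
  by rewrite det1 mxtrace1 ln_1; split=> //; change (0 <= 0 - 0); lra.
have [pivot_gt0 S_pd] := (schur_pivot_gt0 HM, schur_posdef HM).
have [lnS eqS] := IH _ S_pd.
have w_ge0 := trace_outer_ge0 (dlsubmx (M : 'M_(1 + n))).
rewrite det_schur // trace_schur // ln_mult //; last exact: posdef_det_gt0.
move: pivot_gt0 S_pd lnS eqS w_ge0 (ln_le_sub1 pivot_gt0).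
set a := (ulsubmx _ 0 0)%R; set S := (drsubmx _ - _)%R; set w := (\tr (dlsubmx _ *m _))%R.
move=> a_gt0 S_pd lnS eqS w_ge0 lna.
have aw_ge0 : 0 <= (a^-1)%R * w.
  by rewrite RinvE; apply: Rmult_le_pos => //; apply: Rlt_le; apply: Rinv_0_lt_compat.
rewrite S_INR RmulE !RaddE; split=> [|Heq]; first lra.
have lna_eq : ln a = a - 1 by lra.
have S1 : S = (1%:M)%R by apply: eqS; lra.
have aw_eq0 : (a^-1)%R * w = 0 by lra.
apply: schur_eq1 => //; first exact: ln_eq_sub1 lna_eq.
apply: trace_outer_eq0; case: (Rmult_integral _ _ aw_eq0) => // ainv0.
by have := Rinv_neq_0_compat _ (Rgt_not_eq _ _ a_gt0); rewrite -RinvE ainv0.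
Qed.

Definition logdet_div n (A B : 'M[R]_n) : R :=
  (\tr (invmx A *m B))%R - INR n - (ln (\det B)%R - ln (\det A)%R).

Lemma logdet_div1l n (M : 'M[R]_n) :
  logdet_div (1%:M)%R M = (\tr M)%R - INR n - ln (\det M)%R.
Proof. by rewrite /logdet_div invmx1 mul1mx det1 ln_1 Rminus_0_r. Qed.

Lemma logdet_div_congr n (Q A B : 'M[R]_n) : Q \in unitmx ->
  0 < (\det A)%R -> 0 < (\det B)%R ->
  logdet_div (Q *m A *m Q^T) (Q *m B *m Q^T) = logdet_div A B.
Proof.
move=> uQ dA dB; rewrite /logdet_div !det_congr.
have uA : A \in unitmx by rewrite unitmxE unitfE; apply/eqP; apply: Rgt_not_eq.
have dQ2 := unitmx_det_sqr_gt0 uQ.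
rewrite (ln_mult _ _ dQ2 dA) (ln_mult _ _ dQ2 dB).
have -> : (\tr (invmx (Q *m A *m Q^T) *m (Q *m B *m Q^T)) = \tr (invmx A *m B))%R.
  rewrite invmx_congr // !mulmxA mulmxKV // -mulmxA mxtrace_mulC !mulmxA.
  by rewrite trmx_inv mulmxK ?unitmx_tr // mxtrace_mulC.
lra.
Qed.

Lemma logdet_div_posdef n (A B : 'M[R]_n) : sym_posdef A -> sym_posdef B ->
  0 <= logdet_div A B /\ (logdet_div A B = 0 -> A = B).
Proof.
move=> /posdef_factor[P uP ->] HB; pose M := (invmx P *m B *m (invmx P)^T)%R.
have HM : sym_posdef M by apply: sym_posdef_congr; rewrite ?unitmx_inv.
have -> : B = (P *m M *m P^T)%R.
  by rewrite /M !mulmxA mulmxV // mul1mx -mulmxA -trmx_mul mulmxV // trmx1 mulmx1.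
have -> : (P *m P^T = P *m 1%:M *m P^T)%R by rewrite mulmx1.
have d1 : 0 < (\det (1%:M : 'M[R]_n))%R by rewrite det1; exact: Rlt_0_1.
rewrite logdet_div_congr ?logdet_div1l //; last exact: posdef_det_gt0.
have [ln_le ln_eq] := ln_det_le_trace HM; split; first lra.
by move=> div0; rewrite ln_eq //; lra.
Qed.

Lemma hNo_det d (X : 'M[R]_d) : 0 < (\det X)%R ->
  hNo X = / 2 * (INR d * ln (2 * PI) + INR d + ln (\det X)%R).
Proof.
move=> dX; have two_pi_gt0 : 0 < 2 * PI by have := PI_RGT_0; lra.
have two_pi_e_gt0 : 0 < 2 * PI * exp 1 by apply: Rmult_lt_0_compat => //; apply: exp_pos.
rewrite /hNo ln_mult //; last exact: pow_lt.
by rewrite ln_pow // ln_mult ?ln_exp //; [ring | apply: exp_pos].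
Qed.

Lemma ln_2PI_pow_mul d x : 0 < x -> ln ((2 * PI) ^ d * x) = INR d * ln (2 * PI) + ln x.
Proof.
move=> x_gt0; have two_pi_gt0 : 0 < 2 * PI by have := PI_RGT_0; lra.
by rewrite ln_mult ?ln_pow //; apply: pow_lt.
Qed.

Lemma twice_entropy_gap d (C1 C2 : 'M[R]_d) l1 l2 t :
  let C := (l1 *: C1 + l2 *: C2)%R in
  0 < (\det C)%R -> 0 < (\det C1)%R -> 0 < (\det C2)%R ->
  2 * (hNo C * exp (/ 2 * qform C t) - l1 * hNo C1 * exp (/ 2 * qform C1 t)
       - l2 * hNo C2 * exp (/ 2 * qform C2 t))
  = - F2 l1 l2 C1 C2 t + l1 * exp (/ 2 * qform C1 t) * logdet_div C C1
    + l2 * exp (/ 2 * qform C2 t) * logdet_div C C2.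
Proof.
move=> C dC dC1 dC2.
rewrite /F2 /F1 /logdet_div -/C !hNo_det // ln_2PI_pow_mul //.
field.
Qed.

Lemma mixture_gap_degenerate d (f : 'M[R]_d -> R) (C1 C2 : 'M[R]_d) l1 l2 :
  l1 + l2 = 1 -> l1 * l2 = 0 \/ C1 = C2 ->
  f (l1 *: C1 + l2 *: C2)%R - l1 * f C1 - l2 * f C2 = 0.
Proof.
move=> l12 [/Rmult_integral[]l0 | <-].
- have -> : l2 = 1 by lra.
  by rewrite l0 scale0r add0r scale1r; ring.
- have -> : l1 = 1 by lra.
  by rewrite l0 scale0r addr0 scale1r; ring.
- have l12R : (l1 + l2)%R = 1%R := l12.
  rewrite -scalerDl l12R scale1r; have -> : l2 = 1 - l1 by lra.
  ring.
Qed.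

Lemma weighted_gap_sign (L F l1 l2 e1 e2 D1 D2 : R) :
  2 * L = - F + l1 * e1 * D1 + l2 * e2 * D2 -> F <= 0 ->
  0 <= l1 -> 0 <= l2 -> 0 < e1 -> 0 < e2 -> 0 <= D1 -> 0 <= D2 ->
  0 <= L /\ (L = 0 -> l1 * l2 = 0 \/ D1 = 0 /\ D2 = 0).
Proof.
move=> gap F_le0 l1_ge0 l2_ge0 e1_gt0 e2_gt0 D1_ge0 D2_ge0.
have k1 : 0 <= l1 * e1 * D1 by apply: Rmult_le_pos => //; apply: Rmult_le_pos; lra.
have k2 : 0 <= l2 * e2 * D2 by apply: Rmult_le_pos => //; apply: Rmult_le_pos; lra.
split=> [|L0]; first lra.
have [l1_gt0|<-] := Rle_lt_or_eq_dec _ _ l1_ge0; last by left; ring.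
have [l2_gt0|<-] := Rle_lt_or_eq_dec _ _ l2_ge0; last by left; ring.
have w1_gt0 : 0 < l1 * e1 by apply: Rmult_lt_0_compat.
have w2_gt0 : 0 < l2 * e2 by apply: Rmult_lt_0_compat.
by right; split; nra.
Qed.

Theorem theorem2p1 (d : nat) (hd : (1 <= d)%N) (C1 C2 : 'M[R]_d) (l1 l2 : R)
  (hC1 : sym_posdef C1) (hC2 : sym_posdef C2)
  (hl1 : 0 <= l1 <= 1) (hl2 : 0 <= l2 <= 1) (hl : l1 + l2 = 1)
  (t : 'cV[R]_d) (ht : setS l1 l2 C1 C2 t) :
  let C := (l1 *: C1 + l2 *: C2)%R in
  let LHS := hNo C * exp (/ 2 * qform C t)
             - l1 * hNo C1 * exp (/ 2 * qform C1 t)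
             - l2 * hNo C2 * exp (/ 2 * qform C2 t) in
  0 <= LHS /\ (LHS = 0 <-> (l1 * l2 = 0 \/ C1 = C2)).
Proof.
move=> C LHS; have [[l1_ge0 _] [l2_ge0 _]] := (hl1, hl2); have [_ F2_le0] := ht.
have HC : sym_posdef C by apply: sym_posdef_convex => //; lra.
have [div1_ge0 div1_eq0] := logdet_div_posdef HC hC1.
have [div2_ge0 div2_eq0] := logdet_div_posdef HC hC2.
have gap := twice_entropy_gap t (posdef_det_gt0 HC) (posdef_det_gt0 hC1) (posdef_det_gt0 hC2).
have [LHS_ge0 LHS_eq0] := weighted_gap_sign gap F2_le0 l1_ge0 l2_ge0
  (exp_pos _) (exp_pos _) div1_ge0 div2_ge0.
split=> //; split=> [/LHS_eq0[|[D1 D2]] | deg]; first by left.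
  by right; rewrite -(div1_eq0 D1) (div2_eq0 D2).
have := mixture_gap_degenerate (fun X => hNo X * exp (/ 2 * qform X t)) hl deg.
by rewrite /LHS /C -!Rmult_assoc.
Qed.
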